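(* Let $H$ be a finite group, $H^g$ a subgroup with abelian quotient $\Gamma=H/H^g$. Let $\alpha\in\Gamma$ and let $Y$ be the set of conjugacy classes of $H$ with image $\alpha$ in $\Gamma$. For an irreducible linear representation $\pi$ of $H$, let $\varphi_{\pi}$ be the function $\varphi_{\pi}\,:\,y^{\sharp}\mapsto \operatorname{Tr}\pi(y^{\sharp})$ on the set $H^{\sharp}$ of conjugacy classes of $H$. Consider on functions on $Y$ the inner product $$ \langle f,g\rangle=\frac{1}{|H^g|}\sum_{y^{\sharp}\in Y}{|y^{\sharp}|f(y^{\sharp})\overline{g(y^{\sharp})}}. $$ (1) For $\pi$, $\tau$ irreducible linear representations of $H$, we have $$ \langle \varphi_{\pi},\varphi_{\tau}\rangle = \begin{cases} 0,&\text{if either $\varphi_{\pi}\mid H^g\not=\varphi_{\tau}\mid H^g$ or $\varphi_{\pi}\mid Y=0$,}\\ \overline{\psi(\alpha)}|\hat{\Gamma}^{\pi}|,&\text{ where $\psi\in\hat{\Gamma}$ satisfies $\pi\otimes\psi\simeq\tau$, otherwise}, \end{cases} $$ where $\hat{\Gamma}$ is the group of characters of $\Gamma$ and $\hat{\Gamma}^{\pi}=\{\psi\in\hat{\Gamma}\,\mid\, \pi\simeq\pi\otimes\psi\}$ (in the second case such a $\psi$ exists). (2) Let $\mathcal{B}$ be the family of functions $y^{\sharp}\mapsto \frac{1}{\sqrt{|\hat{\Gamma}^{\pi}|}}\varphi_{\pi}(y^{\sharp})$, restricted to $Y$, where $\pi$ ranges over the subset of a set of representatives for the equivalence relation $\pi\sim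 \tau$ if and only if $\pi\mid H^g\simeq \tau\mid H^g$, consisting of those representatives such that $\varphi_{\pi}\mid Y\not=0$. Then $\mathcal{B}$ is an orthonormal basis of $L^2(Y)$ for the inner product $\langle f,g\rangle=\frac{1}{|H^g|}\sum_{y^{\sharp}\in Y}|y^{\sharp}|f(y^{\sharp})\overline{g(y^{\sharp})}$.
   Context: Representations are complex linear representations of the finite group $H$; a character $\psi$ of $\Gamma=H/H^g$ is viewed as a one-dimensional representation of $H$ via the quotient map; $|y^{\sharp}|$ is the number of elements in the conjugacy class $y^{\sharp}$. *)

From mathcomp Require Import all_boot all_order all_algebra all_fingroup all_solvable all_field all_character.
Set Implicit Arguments. Unset Strict Implicit. Unset Printing Implicit Defensive.
Import GRing.Theory Num.Theory.
Local Open Scope ring_scope.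

Definition Yclasses (gT : finGroupType) (H Hg : {group gT}) (alpha : coset_of Hg)
  : {set {set gT}} :=
  [set C in classes H | coset Hg (repr C) == alpha].

Definition cls_fun (gT : finGroupType) (H : {group gT}) (phi : 'CF(H))
  : {set gT} -> algC := fun C => phi (repr C).

Definition dotY (gT : finGroupType) (H Hg : {group gT}) (alpha : coset_of Hg)
  (f g : {set gT} -> algC) : algC :=
  (#|Hg|%:R)^-1 * \sum_(C in Yclasses H alpha) #|C|%:R * f C * (g C)^*.

Definition stab_lin (gT : finGroupType) (H Hg : {group gT}) (i : Iirr H)
  : {set Iirr (H / Hg)%g} :=
  [set k : Iirr (H / Hg)%g | 'chi_i * ('chi_k %% Hg)%CF == 'chi_i].

Definition vanishes_on_Y (gT : finGroupType) (H Hg : {group gT}) (alpha : coset_of Hg)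
  (i : Iirr H) : Prop :=
  forall C, C \in Yclasses H alpha -> cls_fun 'chi_i C = 0.

Definition res_repr_set (gT : finGroupType) (H Hg : {group gT}) (R : {set Iirr H}) : Prop :=
  forall i : Iirr H, exists! r, r \in R /\ 'Res[Hg] 'chi_r = 'Res[Hg] 'chi_i.

Definition Bfun (gT : finGroupType) (H Hg : {group gT}) (i : Iirr H) : {set gT} -> algC :=
  fun C => (sqrtC (#|stab_lin Hg i|%:R))^-1 * cls_fun 'chi_i C.

From mathcomp Require Import all_boot all_order all_algebra all_fingroup all_solvable all_field all_character.
From mathcomp Require Import ring.
Set Implicit Arguments. Unset Strict Implicit. Unset Printing Implicit Defensive.
Import Order.TTheory GRing.Theory Num.Theory.
Local Open Scope ring_scope.

(* Since Gamma = H / Hg is abelian, its irreducible characters chi_k are linear, and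
   column orthogonality says that the indicator of the fibre of alpha in H is
   |Gamma|^-1 sum_k conj(chi_k alpha) lambda_k, with lambda_k the inflation of chi_k.
   Summing over the classes of Y is summing over that fibre, whence
   <phi_i, phi_j> = sum_k conj(chi_k alpha) [chi_i lambda_k = chi_j].  The case
   alpha = 1 computes [Res chi_i, Res chi_j] as the number of twists lambda_k taking
   chi_i to chi_j: equal restrictions force a twist, and |hat(Gamma)^pi| is the norm
   of Res chi_i.  On Y every lambda_k is the constant chi_k alpha, so when chi_i does
   not vanish on Y all twists taking chi_i to chi_j agree at alpha.  For spanning,
   extend f to a class function, expand it in irreducibles, and on Y replace each
   chi_i by chi_k alpha times its representative. *)

Lemma vanishes_on_YP (gT : finGroupType) (H Hg : {group gT}) (alpha : coset_of Hg)
    (i : Iirr H) :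
  reflect (vanishes_on_Y alpha i)
          [forall C in Yclasses H alpha, cls_fun 'chi_i C == 0].
Proof.
apply: (iffP forall_inP) => [vanish C /vanish/eqP // | vanish C /vanish ->].
exact: eqxx.
Qed.

Lemma dotY_vanishing (gT : finGroupType) (H Hg : {group gT}) (alpha : coset_of Hg)
    (i : Iirr H) (g : {set gT} -> algC) :
  vanishes_on_Y alpha i -> dotY H alpha (cls_fun 'chi_i) g = 0.
Proof.
by move=> vanish; rewrite /dotY big1 ?mulr0 // => C /vanish->; rewrite mulr0 mul0r.
Qed.

Lemma dotYZ (gT : finGroupType) (H Hg : {group gT}) (alpha : coset_of Hg)
    (c d : algC) (f g : {set gT} -> algC) :
  dotY H alpha (fun C => c * f C) (fun C => d * g C) = c * d^* * dotY H alpha f g.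
Proof.
rewrite /dotY mulrCA; congr (_ * _); rewrite mulr_sumr; apply: eq_bigr => C _.
by rewrite rmorphM /=; ring.
Qed.

Lemma cfun_class_repr (gT : finGroupType) (H : {group gT}) (C D : {set gT}) :
  C \in classes H -> D \in classes H -> ('1_C : 'CF(H)) (repr D) = (C == D)%:R.
Proof.
case/imsetP=> x Hx -> /imsetP[y Hy ->]; rewrite cfun_repr cfun_classE Hx /=.
by congr ((_ : bool)%:R); apply/idP/eqP => [/class_eqP-> | ->]; last exact: class_refl.
Qed.

Lemma cls_fun_extension (gT : finGroupType) (H : {group gT}) (f : {set gT} -> algC) :
  exists F : 'CF(H), forall C, C \in classes H -> F (repr C) = f C.
Proof.
exists (\sum_(D in classes H) f D *: '1_D) => C clC.
rewrite sum_cfunE (bigD1 C) //= big1 => [|D /andP[clD neDC]].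
  by rewrite cfunE cfun_class_repr // eqxx mulr1 addr0.
by rewrite cfunE cfun_class_repr // (negbTE neDC) mulr0.
Qed.

Lemma res_repr_set_inj (gT : finGroupType) (H Hg : {group gT}) (R : {set Iirr H}) :
  res_repr_set Hg R ->
  {in R &, forall r s, 'Res[Hg] 'chi_r = 'Res[Hg] 'chi_s -> r = s}.
Proof.
move=> reprR r s Rr Rs eqRes; have [t [_ uniq_t]] := reprR s.
by rewrite -(uniq_t r (conj Rr eqRes)) (uniq_t s (conj Rs erefl)).
Qed.

Section AbelianQuotient.

Variables (gT : finGroupType) (H N : {group gT}).
Hypotheses (nsNH : (N <| H)%g) (abHN : abelian (H / N)%g).

Let sNH : (N \subset H)%g := normal_sub nsNH.
Let nNH : (H \subset 'N(N))%g := normal_norm nsNH.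

Local Notation lambda k := ('chi[H / N]_k %% N)%CF.

Lemma coset_conjg x y : x \in H -> y \in H -> coset N (x ^ y)%g = coset N x.
Proof.
move=> Hx Hy; rewrite morphJ ?(subsetP nNH) //; apply/conjg_fixP/commgP.
by apply: (centsP abHN); apply: mem_quotient.
Qed.

Lemma repr_Yclasses C alpha :
  C \in Yclasses H alpha -> repr C \in H /\ coset N (repr C) = alpha.
Proof. by rewrite inE => /andP[/repr_classesP[Hx _] /eqP]. Qed.

Lemma sum_Yclasses (phi : 'CF(H)) alpha :
  \sum_(C in Yclasses H alpha) #|C|%:R * phi (repr C)
    = \sum_(x in H | coset N x == alpha) phi x.
Proof.
pose F x := phi x * (coset N x == alpha)%:R.
have FJ : {in H &, forall x y, F (x ^ y)%g = F x}.
  by move=> x y Hx Hy; rewrite /F cfunJ ?coset_conjg.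
transitivity (\sum_(C in classes H) #|C|%:R * F (repr C)).
  rewrite (eq_bigl (fun C => (C \in classes H) && (coset N (repr C) == alpha))).
    rewrite big_mkcondr; apply: eq_bigr => C _.
    by rewrite /F; case: eqP; rewrite ?mulr1 ?mulr0.
  by move=> C; rewrite inE.
rewrite -sum_by_classes // big_mkcondr.
by apply: eq_bigr => x _; rewrite /F; case: eqP; rewrite ?mulr1 ?mulr0.
Qed.

Lemma mod_irr_lin_char (k : Iirr (H / N)) : lambda k \is a linear_char.
Proof. exact/cfMod_lin_char/char_abelianP. Qed.

Lemma cfdot_mul_mod_irr (i j : Iirr H) (k : Iirr (H / N)) :
  '['chi_i * lambda k, 'chi_j] = ('chi_i * lambda k == 'chi_j)%:R.
Proof.
have /irrP[m ->] : 'chi_i * lambda k \in irr H.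
  by rewrite mulrC mul_lin_irr ?mod_irr_lin_char ?mem_irr.
by rewrite cfdot_irr (inj_eq irr_inj).
Qed.

Lemma abelian_second_orthogonality y alpha :
  y \in (H / N)%g -> alpha \in (H / N)%g ->
  \sum_(k : Iirr (H / N)) 'chi_k y * ('chi_k alpha)^*
    = #|(H / N)%g|%:R * (y == alpha)%:R.
Proof.
move=> HNy HNalpha; rewrite second_orthogonality_relation // mulr_natr.
have -> : 'C_(H / N)[y]%g = (H / N)%g.
  by apply/setIidPl/subsetP=> z HNz; apply/cent1P/(centsP abHN).
congr (_ *+ (_ : bool)); apply/imsetP/eqP => [[z HNz ->] | ->].
  by apply/conjg_fixP/commgP/(centsP abHN).
by exists 1%g; rewrite ?group1 ?conjg1.
Qed.

Lemma sum_coset_irr (i j : Iirr H) alpha : alpha \in (H / N)%g ->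
  \sum_(x in H | coset N x == alpha) 'chi_i x * ('chi_j x)^*
  = #|N|%:R * \sum_k ('chi_k alpha)^* * ('chi_i * lambda k == 'chi_j)%:R.
Proof.
move=> HNalpha.
have cardHN : #|H|%:R = #|N|%:R * #|(H / N)%g|%:R :> algC.
  by rewrite -natrM card_quotient // Lagrange.
have nz_cardHN : #|(H / N)%g|%:R != 0 :> algC by rewrite pnatr_eq0 -lt0n cardG_gt0.
have nz_cardN : #|N|%:R != 0 :> algC by rewrite pnatr_eq0 -lt0n cardG_gt0.
transitivity (\sum_(x in H) \sum_k #|(H / N)%g|%:R^-1 *
   (('chi_k alpha)^* * (('chi_i * lambda k) x * ('chi_j x)^*))).
  rewrite big_mkcondr; apply: eq_bigr => x Hx.
  rewrite (eq_bigr (fun k => #|(H / N)%g|%:R^-1 * ('chi_i x * ('chi_j x)^*) *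
                             ('chi_k (coset N x) * ('chi_k alpha)^*))); last first.
    by move=> k _; rewrite cfunE cfModE //; ring.
  rewrite -mulr_sumr abelian_second_orthogonality ?mem_quotient //.
  by case: eqP; rewrite ?mulr0 // mulr1 mulrAC mulVf ?mul1r.
rewrite exchange_big mulr_sumr; apply: eq_bigr => k _.
rewrite -cfdot_mul_mod_irr cfdotE -!mulr_sumr cardHN.
by field; rewrite nz_cardN nz_cardHN.
Qed.

Lemma dotY_irr (i j : Iirr H) alpha : alpha \in (H / N)%g ->
  dotY H alpha (cls_fun 'chi_i) (cls_fun 'chi_j)
    = \sum_k ('chi_k alpha)^* * ('chi_i * lambda k == 'chi_j)%:R.
Proof.
move=> HNalpha; rewrite /dotY /cls_fun.
rewrite (eq_bigr (fun C : {set gT} => #|C|%:R * ('chi_i * ('chi_j)^*%CF) (repr C)));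
  last by move=> C _; rewrite !cfunE mulrA.
rewrite sum_Yclasses; under eq_bigr do rewrite !cfunE.
by rewrite sum_coset_irr // mulKf // pnatr_eq0 -lt0n cardG_gt0.
Qed.

Lemma cfRes_mul_mod_irr (i : Iirr H) (k : Iirr (H / N)) :
  'Res[N] ('chi_i * lambda k) = 'Res[N] 'chi_i.
Proof.
rewrite rmorphM /= [X in _ * X]cfRes_sub_ker ?cfker_mod //.
by rewrite lin_char1 ?mod_irr_lin_char // scale1r mulr1.
Qed.

Lemma cfdot_Res_irr (i j : Iirr H) :
  '['Res[N] 'chi_i, 'Res[N] 'chi_j] = \sum_k ('chi_i * lambda k == 'chi_j)%:R.
Proof.
have nz_cardN : #|N|%:R != 0 :> algC by rewrite pnatr_eq0 -lt0n cardG_gt0.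
rewrite cfdotE (eq_bigr (fun x => 'chi_i x * ('chi_j x)^*)) => [|x Nx];
  last by rewrite !cfResE.
rewrite (eq_bigl (fun x => (x \in H) && (coset N x == 1%g))) => [|x].
  rewrite sum_coset_irr ?group1 // mulKf //; apply: eq_bigr => k _.
  by rewrite lin_char1 ?conjC1 ?mul1r // (char_abelianP _ abHN).
apply/idP/andP=> [Nx | [Hx /eqP/coset_idr->]] //; last exact: (subsetP nNH).
by rewrite (subsetP sNH) // coset_id.
Qed.

Lemma card_stab_lin (i : Iirr H) : #|stab_lin N i|%:R = '['Res[N] 'chi_i].
Proof.
rewrite cfdot_Res_irr -sum1_card natr_sum big_mkcond /=.
by apply: eq_bigr => k _; rewrite inE; case: eqP.
Qed.

Lemma stab_lin_card_gt0 (i : Iirr H) : (0 < #|stab_lin N i|)%N.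
Proof. by apply/card_gt0P; exists 0; rewrite inE irr0 cfMod_cfun1 mulr1. Qed.

Lemma cfRes_irr_eq_twist (i j : Iirr H) :
  'Res[N] 'chi_i = 'Res[N] 'chi_j -> exists k, 'chi_i * lambda k = 'chi_j.
Proof.
move=> eqRes.
have [k /eqP twist_k | no_twist] := pickP (fun k => 'chi_i * lambda k == 'chi_j).
  by exists k.
have := stab_lin_card_gt0 i.
rewrite -(ltr0n algC) card_stab_lin {2}eqRes cfdot_Res_irr.
rewrite big1 => [|k _]; last by rewrite no_twist.
by rewrite ltxx.
Qed.

Lemma dotY_Res_neq (i j : Iirr H) alpha : alpha \in (H / N)%g ->
  'Res[N] 'chi_i <> 'Res[N] 'chi_j ->
  dotY H alpha (cls_fun 'chi_i) (cls_fun 'chi_j) = 0.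
Proof.
move=> HNalpha neRes; rewrite dotY_irr // big1 // => k _.
case: eqP => [twist_k | _]; rewrite ?mulr0 //.
by case: neRes; rewrite -twist_k cfRes_mul_mod_irr.
Qed.

Lemma cfMod_Yclasses (k : Iirr (H / N)) alpha C :
  C \in Yclasses H alpha -> lambda k (repr C) = 'chi_k alpha.
Proof. by case/repr_Yclasses=> Hx <-; rewrite cfModE. Qed.

Lemma twist_Yclasses (r i : Iirr H) (k : Iirr (H / N)) alpha C :
  'chi_r * lambda k = 'chi_i ->
  C \in Yclasses H alpha -> 'chi_i (repr C) = 'chi_k alpha * 'chi_r (repr C).
Proof. by move=> <- YC; rewrite cfunE (cfMod_Yclasses _ YC) mulrC. Qed.

Lemma dotY_twist (i j : Iirr H) (k : Iirr (H / N)) alpha : alpha \in (H / N)%g ->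
  ~ vanishes_on_Y alpha i -> 'chi_i * lambda k = 'chi_j ->
  dotY H alpha (cls_fun 'chi_i) (cls_fun 'chi_j) = ('chi_k alpha)^* * #|stab_lin N i|%:R.
Proof.
move=> HNalpha nonvanishing twist_k.
have [C YC chiC_neq0] : exists2 C, C \in Yclasses H alpha & cls_fun 'chi_i C != 0.
  by apply/exists_inP; rewrite -negb_forall_in; apply/negP => /vanishes_on_YP.
have twist_val l : 'chi_i * lambda l = 'chi_j -> 'chi_l alpha = 'chi_k alpha.
  move=> twist_l; apply: (mulIf chiC_neq0).
  by rewrite /cls_fun -(twist_Yclasses twist_l YC) -(twist_Yclasses twist_k YC).
have eqRes : 'Res[N] 'chi_i = 'Res[N] 'chi_j by rewrite -twist_k cfRes_mul_mod_irr.
rewrite dotY_irr // card_stab_lin {2}eqRes cfdot_Res_irr.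
rewrite mulr_sumr; apply: eq_bigr => l _.
by case: eqP => [/twist_val-> | _]; rewrite ?mulr0.
Qed.

Lemma sqrt_card_stab_lin_neq0 (i : Iirr H) : sqrtC (#|stab_lin N i|%:R : algC) != 0.
Proof. by rewrite sqrtC_eq0 pnatr_eq0 -lt0n stab_lin_card_gt0. Qed.

Lemma dotY_Bfun_diag (r : Iirr H) alpha : alpha \in (H / N)%g ->
  ~ vanishes_on_Y alpha r -> dotY H alpha (Bfun N r) (Bfun N r) = 1.
Proof.
move=> HNalpha nonvanishing; rewrite /Bfun dotYZ (dotY_twist (k := 0)) //;
  last by rewrite irr0 cfMod_cfun1 mulr1.
rewrite irr0 cfun1E HNalpha conjC1 mul1r geC0_conj ?invr_ge0 ?sqrtC_ge0 ?ler0n //.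
by rewrite -invfM -expr2 sqrtCK mulVf // pnatr_eq0 -lt0n stab_lin_card_gt0.
Qed.

Lemma dotY_Bfun (R : {set Iirr H}) (r s : Iirr H) alpha : alpha \in (H / N)%g ->
  res_repr_set N R -> r \in R -> s \in R -> ~ vanishes_on_Y alpha r ->
  dotY H alpha (Bfun N r) (Bfun N s) = (r == s)%:R.
Proof.
move=> HNalpha reprR Rr Rs nonvanishing.
have [<- | neq_rs] := eqVneq r s; first exact: dotY_Bfun_diag.
rewrite /Bfun dotYZ dotY_Res_neq ?mulr0 // => eqRes.
by case/eqP: neq_rs; apply: res_repr_set_inj eqRes.
Qed.

Lemma res_repr_set_twist (R : {set Iirr H}) : res_repr_set N R ->
  exists rep : Iirr H -> Iirr H, exists tw : Iirr H -> Iirr (H / N),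
    forall i, rep i \in R /\ 'chi_(rep i) * lambda (tw i) = 'chi_i.
Proof.
move=> reprR.
have twist_exists i : exists p : Iirr H * Iirr (H / N),
    p.1 \in R /\ 'chi_p.1 * lambda p.2 = 'chi_i.
  have [r [[Rr eqRes] _]] := reprR i.
  by have [k twist_k] := cfRes_irr_eq_twist eqRes; exists (r, k).
have [f f_twist] := fin_all_exists twist_exists.
by exists (fun i => (f i).1), (fun i => (f i).2).
Qed.

Lemma Bfun_span (R : {set Iirr H}) (alpha : coset_of N) : res_repr_set N R ->
  forall f : {set gT} -> algC, exists c : Iirr H -> algC,
    forall C, C \in Yclasses H alpha ->
      f C = \sum_(r in [set r in R |
                        ~~ [forall C in Yclasses H alpha, cls_fun 'chi_r C == 0]])
              c r * Bfun N r C.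
Proof.
move=> reprR f; set B := [set r in R | _].
have [F F_ext] := cls_fun_extension H f.
have [rep [tw rep_twist]] := res_repr_set_twist reprR.
exists (fun r => sqrtC #|stab_lin N r|%:R *
                 \sum_(i | rep i == r) '[F, 'chi_i] * 'chi_(tw i) alpha) => C YC.
have clC : C \in classes H by move: YC; rewrite inE => /andP[].
rewrite -F_ext // {1}(cfun_sum_cfdot F) sum_cfunE.
under eq_bigr do rewrite cfunE (twist_Yclasses (rep_twist _).2 YC) mulrA.
rewrite (bigID (fun i => rep i \in B)) /= [X in _ + X]big1 ?addr0 => [|i]; last first.
  rewrite inE (rep_twist i).1 /= negbK => /forall_inP/(_ C YC)/eqP.
  by rewrite /cls_fun => ->; rewrite mulr0.
rewrite (partition_big rep (mem B)) //=; apply: eq_bigr => r Br.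
rewrite /Bfun /cls_fun mulrACA mulfV ?sqrt_card_stab_lin_neq0 // mul1r mulr_suml.
apply: eq_big => [i | i /andP[_ /eqP->]] //.
by case: eqP => [-> | _]; rewrite ?Br ?andbF.
Qed.

End AbelianQuotient.

Theorem lemma6p1 (gT : finGroupType) (H Hg : {group gT}) (alpha : coset_of Hg)
  (nHgH : (Hg <| H)%g) (abGamma : abelian (H / Hg)%g) (alphaG : alpha \in (H / Hg)%g) :
  (* (1) *)
  (forall i j : Iirr H,
     ((('Res[Hg] 'chi_i <> 'Res[Hg] 'chi_j) \/ vanishes_on_Y alpha i) ->
        dotY H alpha (cls_fun 'chi_i) (cls_fun 'chi_j) = 0)
     /\
     (('Res[Hg] 'chi_i = 'Res[Hg] 'chi_j /\ ~ vanishes_on_Y alpha i) ->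
        (exists k : Iirr (H / Hg)%g, 'chi_i * ('chi_k %% Hg)%CF = 'chi_j) /\
        (forall k : Iirr (H / Hg)%g, 'chi_i * ('chi_k %% Hg)%CF = 'chi_j ->
           dotY H alpha (cls_fun 'chi_i) (cls_fun 'chi_j)
           = ('chi_k alpha)^* * #|stab_lin Hg i|%:R)))
  /\
  (* (2) *)
  (forall R : {set Iirr H}, res_repr_set Hg R ->
     let B := [set r in R | ~~ [forall C in Yclasses H alpha, cls_fun 'chi_r C == 0]] in
     (forall r s, r \in B -> s \in B ->
        dotY H alpha (Bfun Hg r) (Bfun Hg s) = (r == s)%:R)
     /\
     (forall f : {set gT} -> algC, exists c : Iirr H -> algC,
        forall C, C \in Yclasses H alpha ->
          f C = \sum_(r in B) c r * Bfun Hg r C)).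
Proof.
split=> [i j | R reprR B].
  split=> [[neRes | vanishing] | [eqRes nonvanishing]].
  - exact: dotY_Res_neq.
  - exact: dotY_vanishing.
  - split=> [|k twist_k]; first exact: cfRes_irr_eq_twist.
    exact: dotY_twist.
split=> [r s | ]; last exact: Bfun_span.
rewrite !inE => /andP[Rr /vanishes_on_YP nonvanishing] /andP[Rs _].
exact: dotY_Bfun.
Qed.
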